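(* Let $\beta^*_{\mathrm{CW}}(p)=\sup\{\beta\ge0:\sup_{t\in[0,1]}(\beta t^p-I(t))=0\}$ for integers $p\ge2$. Then (1) $\lim_{p\to\infty}\beta^*_{\mathrm{CW}}(p)=\log2$; (2) the sequence $\{\beta^*_{\mathrm{CW}}(p)\}_{p\ge2}$ is strictly increasing; (3) $\beta^*_{\mathrm{CW}}(2)=1/2$.
   Context: $I(t)=\frac12[(1+t)\log(1+t)+(1-t)\log(1-t)]$ for $t\in[0,1]$ (with $0\log0=0$). *)

From HB Require Import structures.
From mathcomp Require Import all_boot all_order all_algebra.
From mathcomp Require Import all_classical all_reals all_analysis.
Set Implicit Arguments. Unset Strict Implicit. Unset Printing Implicit Defensive.
Import Order.TTheory GRing.Theory Num.Theory.
Local Open Scope ring_scope.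
Local Open Scope classical_set_scope.

Definition xlogx {R : realType} (x : R) : R := if x == 0 then 0 else x * ln x.

Definition Irate {R : realType} (t : R) : R :=
  2^-1 * (xlogx (1 + t) + xlogx (1 - t)).

Definition supF {R : realType} (p : nat) (beta : R) : R :=
  sup [set beta * t ^+ p - Irate t | t in `[0, 1]%classic].

Definition beta_star {R : realType} (p : nat) : R :=
  sup [set beta : R | 0 <= beta /\ supF p beta = 0].

From HB Require Import structures.
From mathcomp Require Import all_boot all_order all_algebra.
From mathcomp Require Import all_classical all_reals all_analysis.
From mathcomp Require Import ring lra.
Import Order.TTheory GRing.Theory Num.Theory numFieldNormedType.Exports.
Local Open Scope ring_scope.
Local Open Scope classical_set_scope.

(* For p > 0, sup_{t in [0,1]} (beta t^p - I t) = 0 exactly when beta is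
   "admissible", i.e. beta t^p <= I t on [0,1] (the value 0 is attained at
   t = 0).  Hence beta*(p) is the largest admissible beta, and every
   statement about beta*(p) reduces to pointwise estimates of I:
   - I t >= t^2/2 on [0,1], so beta*(p) >= 1/2 for p >= 2;
   - I 1 = ln 2, so beta*(p) <= ln 2; the expansion of I near t = 1
     (I (1-s) <= ((2-s) ln 2 + s ln s)/2) makes this strict;
   - I t >= ln 2 - 2e on [1-e^2, 1], so a beta <= ln 2 - 2e is admissible as
     soon as it is admissible on [0, 1-e^2); there t^p is small for large p,
     which gives the limit ln 2, and t^(p+1) <= (1-e^2) t^p, which gives
     strict monotonicity;
   - 2 (1-t) I t <= t^2 (1+t) near 0 forces beta*(2) <= 1/2.
   The file first develops the calculus facts and the estimates of I, then
   the characterisation of beta*(p), and derives the theorem at the end. *)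

Section RateFunction.
Variable R : realType.
Implicit Types x y t s u e : R.

Lemma is_derive_1D x : is_derive x 1 (fun y : R => 1 + y) 1.
Proof.
by have := is_deriveD (is_derive_cst (1 : R) x 1) (is_derive_id x 1); rewrite add0r.
Qed.

Lemma is_derive_1B x : is_derive x 1 (fun y : R => 1 - y) (-1).
Proof.
by have := is_deriveB (is_derive_cst (1 : R) x 1) (is_derive_id x 1); rewrite sub0r.
Qed.

Lemma is_derive_ln1D x : -1 < x ->
  is_derive x 1 (fun y : R => ln (1 + y)) (1 + x)^-1.
Proof.
move=> hx; have h1 : 0 < 1 + x by lra.
have := @is_derive1_comp R (@ln R) (fun y => 1 + y) x _ _ (is_derive1_ln h1) (is_derive_1D x).
by rewrite mulr1.
Qed.

Lemma is_derive_ln1B x : x < 1 ->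
  is_derive x 1 (fun y : R => ln (1 - y)) (- (1 - x)^-1).
Proof.
move=> hx; have h1 : 0 < 1 - x by lra.
have := @is_derive1_comp R (@ln R) (fun y => 1 - y) x _ _ (is_derive1_ln h1) (is_derive_1B x).
by rewrite mulrN1.
Qed.

Lemma le_of_derive_ge0 (f df : R -> R) a b : a <= b ->
  (forall x, a <= x <= b -> is_derive x 1 f (df x)) ->
  (forall x, a <= x <= b -> 0 <= df x) -> f a <= f b.
Proof.
move=> ab hd hp.
have [x||c] := @MVT_segment R f df a b ab.
- by rewrite in_itv /= => /andP[h1 h2]; apply: hd; rewrite !ltW.
- apply: derivable_within_continuous => x; rewrite in_itv /= => /hd.
  by case.
- rewrite in_itv /= => hc e; rewrite -subr_ge0 e.
  by apply: mulr_ge0; [exact: hp | rewrite subr_ge0].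
Qed.

Lemma bernoulli_ineq n x : -1 <= x -> 1 + n%:R * x <= (1 + x) ^+ n.
Proof.
move=> x1; elim: n => [|n IH]; first by rewrite mul0r addr0 expr0.
have IHx : (1 + x) * (1 + n%:R * x) <= (1 + x) * (1 + x) ^+ n.
  by apply: ler_wpM2l => //; lra.
have : 0 <= (n%:R : R) * (x * x) by rewrite mulr_ge0 // -expr2 sqr_ge0.
rewrite exprS -natr1; nra.
Qed.

(* (1-d)^n (1+nd) <= (1-d^2)^n <= 1: powers of 1-d decay like 1/(nd). *)
Lemma expr1B_decay n (d : R) : 0 <= d <= 1 -> (1 - d) ^+ n * (1 + n%:R * d) <= 1.
Proof.
move=> /andP[d0 d1].
apply: (@le_trans _ _ ((1 - d) ^+ n * (1 + d) ^+ n)).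
  by apply: ler_wpM2l; [apply: exprn_ge0; lra | apply: bernoulli_ineq; lra].
by rewrite -exprMn; apply: exprn_ile1; nra.
Qed.

(* The tangent-line bound ln y <= y - 1 applied at 1/y. *)
Lemma ln_ge_1Bv y : 0 < y -> 1 - y^-1 <= ln y.
Proof.
move=> y0; have iy : 0 < y^-1 by rewrite invr_gt0.
have := @le_ln1Dx R (y^-1 - 1) ltac:(lra).
by rewrite addrC subrK lnV ?posrE //; lra.
Qed.

Lemma ln2_ge_half : 2^-1 <= ln (2 : R).
Proof. by have := @ln_ge_1Bv 2 ltac:(lra); lra. Qed.

Lemma ln2_le1 : ln (2 : R) <= 1.
Proof. by have := @le_ln1Dx R 1 ltac:(lra). Qed.

(* s ln s >= -2 sqrt s, from ln r >= 1 - 1/r with r = sqrt s. *)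
Lemma xlnx_ge_Nsqrt s : 0 < s -> - 2 * Num.sqrt s <= s * ln s.
Proof.
move=> s0; set r := Num.sqrt s.
have r0 : 0 < r by rewrite sqrtr_gt0.
have <- : r ^+ 2 = s by rewrite sqr_sqrtr // ltW.
rewrite lnXn // -mulr_natr.
have : 2 * r * (1 - r^-1) <= 2 * r * ln r.
  by apply: ler_wpM2l; [lra | exact: ln_ge_1Bv].
have -> : 2 * r * (1 - r^-1) = 2 * r - 2 by field; lra.
nra.
Qed.

Lemma Irate_itv t : 0 <= t < 1 ->
  Irate t = 2^-1 * ((1 + t) * ln (1 + t) + (1 - t) * ln (1 - t)).
Proof.
move=> /andP[t0 t1].
rewrite /Irate /xlogx (gt_eqF (_ : 0 < 1 + t)); last lra.
by rewrite (gt_eqF (_ : 0 < 1 - t)); last lra.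
Qed.

Lemma Irate0 : Irate (0 : R) = 0.
Proof. by rewrite Irate_itv ?lexx ?ltr01 // addr0 subr0 ln1 mulr0 addr0 mulr0. Qed.

Lemma Irate1 : Irate (1 : R) = ln 2.
Proof.
rewrite /Irate /xlogx subrr eqxx addr0 (gt_eqF (_ : 0 < 1 + 1)); last lra.
by rewrite (_ : 1 + 1 = 2) //; lra.
Qed.

Lemma atanh_ge x : 0 <= x < 1 -> 2 * x <= ln (1 + x) - ln (1 - x).
Proof.
move=> /andP[x0 x1]; rewrite -subr_ge0.
pose k y := ln (1 + y) - ln (1 - y) - 2 * y.
have -> : ln (1 + x) - ln (1 - x) - 2 * x = k x - k 0.
  by rewrite /k !addr0 !subr0 ln1 mulr0 !subr0.
rewrite subr_ge0.
apply: (@le_of_derive_ge0 k (fun y => (1 + y)^-1 - (- (1 - y)^-1) - 2)) => //.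
- move=> y /andP[y0 y1].
  have := is_deriveB (is_deriveB (@is_derive_ln1D y ltac:(lra))
    (@is_derive_ln1B y ltac:(lra))) (is_deriveZ 2 (is_derive_id y 1)).
  by rewrite [2%:A]mulr1.
- move=> y /andP[y0 y1].
  have a1 : 1 - y <= (1 + y)^-1 by rewrite -div1r ler_pdivlMr; nra.
  have a2 : 1 + y <= (1 - y)^-1 by rewrite -div1r ler_pdivlMr; nra.
  lra.
Qed.

(* 2 I t >= t^2 for t < 1: both sides vanish at 0 and the derivatives
   compare by atanh_ge. *)
Lemma entropy_ge_sqr x : 0 <= x < 1 ->
  x ^+ 2 <= (1 + x) * ln (1 + x) + (1 - x) * ln (1 - x).
Proof.
move=> /andP[x0 x1]; rewrite -subr_ge0.
pose h y := (1 + y) * ln (1 + y) + (1 - y) * ln (1 - y) - y * y.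
have -> : (1 + x) * ln (1 + x) + (1 - x) * ln (1 - x) - x ^+ 2 = h x - h 0.
  by rewrite /h !addr0 !subr0 ln1 !mulr0 !(addr0, subr0) expr2.
rewrite subr_ge0.
apply: (@le_of_derive_ge0 h (fun y => ln (1 + y) - ln (1 - y) - 2 * y)) => //.
- move=> y /andP[y0 y1].
  have := is_deriveB (is_deriveD
      (is_deriveM (is_derive_1D y) (@is_derive_ln1D y ltac:(lra)))
      (is_deriveM (is_derive_1B y) (@is_derive_ln1B y ltac:(lra))))
    (is_deriveM (is_derive_id y 1) (is_derive_id y 1)).
  set D := (X in is_derive _ _ _ X) => H.
  suff -> : ln (1 + y) - ln (1 - y) - 2 * y = D by [].
  have e1 : 1 + y != 0 by lra.
  have e2 : 1 - y != 0 by lra.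
  by rewrite /D -![_ *: _]/(_ * _) mulrN !mulfV //; lra.
- by move=> y /andP[y0 y1]; rewrite subr_ge0; apply: atanh_ge; lra.
Qed.

Lemma Irate_ge_sqr t : 0 <= t <= 1 -> t ^+ 2 / 2 <= Irate t.
Proof.
move=> /andP[t0 t1]; have [ht|ht] := ltrP t 1.
  by rewrite Irate_itv ?t0 //; have := entropy_ge_sqr t ltac:(by rewrite t0 ht); lra.
have -> : t = 1 by apply: le_anti; rewrite t1 ht.
by rewrite Irate1 expr1n; have := ln2_ge_half; lra.
Qed.

Lemma Irate_ge0 t : 0 <= t <= 1 -> 0 <= Irate t.
Proof. by move=> /Irate_ge_sqr; apply: le_trans; rewrite divr_ge0 ?sqr_ge0. Qed.

(* Sharp upper bound near 0: I t <= t^2 (1+t) / (2 (1-t)), from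
   ln (1-t^2) <= -t^2 and (1-t) ln ((1+t)/(1-t)) <= 2 t. *)
Lemma Irate_le_near0 t : 0 <= t < 1 ->
  2 * (1 - t) * Irate t <= t ^+ 2 * (1 + t).
Proof.
move=> /andP[t0 t1]; rewrite Irate_itv ?t0 ?t1 //.
have p1 : 0 < 1 + t by lra.
have p2 : 0 < 1 - t by lra.
have lnM_le : ln (1 + t) + ln (1 - t) <= - t ^+ 2.
  rewrite -lnM ?posrE //.
  have -> : (1 + t) * (1 - t) = 1 + (- t ^+ 2) by rewrite expr2; ring.
  by apply: le_ln1Dx; nra.
have ln_div_le : (1 - t) * (ln (1 + t) - ln (1 - t)) <= 2 * t.
  rewrite -ln_div ?posrE //.
  have q0 : 0 < (1 + t) / (1 - t) by rewrite divr_gt0.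
  have := @le_ln1Dx R ((1 + t) / (1 - t) - 1) ltac:(lra).
  rewrite addrC subrK => /(ler_wpM2l (ltW p2)).
  by have -> : (1 - t) * ((1 + t) / (1 - t) - 1) = 2 * t by field; lra.
have -> : 2 * (1 - t) * (2^-1 * ((1 + t) * ln (1 + t) + (1 - t) * ln (1 - t)))
   = (1 - t) * (ln (1 + t) + ln (1 - t))
     + t * ((1 - t) * (ln (1 + t) - ln (1 - t))) by field.
have := ler_wpM2l (ltW p2) lnM_le; have := ler_wpM2l t0 ln_div_le; nra.
Qed.

Lemma Irate_le_near1 s : 0 < s < 1 -> 2 * Irate (1 - s) <= (2 - s) * ln 2 + s * ln s.
Proof.
move=> /andP[s0 s1]; rewrite Irate_itv; last lra.
rewrite (_ : 1 - (1 - s) = s); last ring.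
rewrite (_ : 1 + (1 - s) = 2 - s); last ring.
have : (2 - s) * ln (2 - s) <= (2 - s) * ln 2.
  by apply: ler_wpM2l; [lra | rewrite ler_ln ?posrE; lra].
lra.
Qed.

Lemma Irate_ge_near1 e t : 0 < e <= 1 -> 1 - e ^+ 2 <= t <= 1 ->
  ln 2 - 2 * e <= Irate t.
Proof.
move=> /andP[e0 e1] /andP[te t1]; have l2 := ln2_le1.
have [ht|ht] := ltrP t 1; last first.
  have -> : t = 1 by apply: le_anti; rewrite t1 ht.
  by rewrite Irate1; lra.
have e2 : e ^+ 2 <= e by rewrite expr2; nra.
pose u := 1 - t; have u0 : 0 < u by rewrite /u; lra.
have ue : u <= e ^+ 2 by rewrite /u; lra.
have -> : t = 1 - u by rewrite /u; ring.
clearbody u; clear te t1 ht.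
rewrite Irate_itv; last lra.
rewrite (_ : 1 - (1 - u) = u); last ring.
rewrite (_ : 1 + (1 - u) = 2 - u); last ring.
have A : (2 - u) * ln 2 - u <= (2 - u) * ln (2 - u).
  have : (2 - u) * (1 - ((2 - u) / 2)^-1) <= (2 - u) * ln ((2 - u) / 2).
    by apply: ler_wpM2l; [lra | apply: ln_ge_1Bv; lra].
  rewrite ln_div ?posrE; try lra.
  have -> : (2 - u) * (1 - ((2 - u) / 2)^-1) = - u by field; lra.
  lra.
have B : Num.sqrt u <= e.
  rewrite -(ler_pXn2r (_ : 0 < 2)%N) ?nnegrE ?sqrtr_ge0 ?(ltW e0) //.
  by rewrite sqr_sqrtr // ltW.
have := xlnx_ge_Nsqrt _ u0; have : u * ln 2 <= u by nra.
lra.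
Qed.

End RateFunction.

Section CurieWeissThreshold.
Variable R : realType.
Implicit Types (b t e : R) (p : nat).

Definition admissible p b := forall t, 0 <= t <= 1 -> b * t ^+ p <= Irate t.

(* For p > 0 the supremum in supF is attained at t = 0, where it is 0. *)
Lemma supF_eq0P p b : (0 < p)%N -> supF p b = 0 <-> admissible p b.
Proof.
move=> p0; set S := [set b * t ^+ p - Irate t | t in `[0, 1]%classic].
have S0 : S 0.
  exists 0; first by rewrite /= in_itv /= lexx ler01.
  by rewrite expr0n (negbTE (lt0n_neq0 p0)) mulr0 Irate0 subrr.
have ubS : has_ubound S.
  exists `|b| => _ [t /= + <-]; rewrite in_itv /= => /andP[t0 t1].
  have := @Irate_ge0 R t ltac:(by rewrite t0 t1).
  have : b * t ^+ p <= `|b|.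
    apply: le_trans (ler_norm _) _; rewrite normrM normrX (ger0_norm t0).
    by rewrite -[leRHS]mulr1; apply: ler_wpM2l => //; exact: exprn_ile1.
  lra.
split=> [supS0 t ht | adm].
- have St : S (b * t ^+ p - Irate t) by exists t; rewrite //= in_itv.
  by have := ub_le_sup ubS St; rewrite /supF in supS0; rewrite supS0 subr_le0.
- apply: le_anti; rewrite (ub_le_sup ubS S0) andbT.
  apply: ge_sup; first by exists 0.
  by move=> _ [t /= + <-]; rewrite in_itv /= subr_le0 => /adm.
Qed.

Lemma admissible_le_ln2 p b : admissible p b -> b <= ln 2.
Proof. by move/(_ 1 ltac:(rewrite ler01 lexx //)); rewrite expr1n mulr1 Irate1. Qed.

Lemma beta_star_set p : (0 < p)%N ->
  [set beta : R | 0 <= beta /\ supF p beta = 0] = [set b | 0 <= b /\ admissible p b].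
Proof. by move=> p0; apply/seteqP; split=> b [b0 /(supF_eq0P _ _ p0) hb]. Qed.

Lemma beta_star_ge p b : (0 < p)%N -> 0 <= b -> admissible p b -> b <= beta_star p.
Proof.
move=> p0 b0 adm; rewrite /beta_star beta_star_set //.
apply: ub_le_sup; last by split.
by exists (ln 2) => c [_ /admissible_le_ln2].
Qed.

Lemma beta_star_admissible p : (0 < p)%N -> admissible p (beta_star p).
Proof.
move=> p0 t /andP[t0 t1]; have [->|tn0] := eqVneq t 0.
  by rewrite expr0n (negbTE (lt0n_neq0 p0)) mulr0 Irate0.
have tp : 0 < t ^+ p by rewrite exprn_gt0 // lt_def tn0 t0.
rewrite -ler_pdivlMr // /beta_star beta_star_set //.
apply: ge_sup; first by exists 0; split=> // s hs; rewrite mul0r; apply: Irate_ge0.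
by move=> b [_ adm]; rewrite ler_pdivlMr //; apply: adm; rewrite t0 t1.
Qed.

Lemma admissible_off_near1 p b e : 0 < e <= 1 -> 0 <= b <= ln 2 - 2 * e ->
  (forall t, 0 <= t < 1 - e ^+ 2 -> b * t ^+ p <= Irate t) -> admissible p b.
Proof.
move=> he /andP[b0 bl] adm t /andP[t0 t1].
have [ht|ht] := ltrP t (1 - e ^+ 2); first by apply: adm; rewrite t0 ht.
apply: le_trans (@Irate_ge_near1 _ e t he ltac:(by rewrite ht t1)).
apply: le_trans bl; rewrite -[leRHS]mulr1; apply: ler_wpM2l => //.
exact: exprn_ile1.
Qed.

(* Lower bound: beta = 1/2 is admissible since t^p/2 <= t^2/2 <= I t. *)
Lemma beta_star_ge_half p : (2 <= p)%N -> 2^-1 <= @beta_star R p.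
Proof.
move=> p2; apply: beta_star_ge => //; first by apply: leq_trans p2.
move=> t /andP[t0 t1]; apply: le_trans (@Irate_ge_sqr R t ltac:(by rewrite t0 t1)).
rewrite -(subnK p2) exprD mulrC -mulrA.
have : t ^+ (p - 2) <= 1 by apply: exprn_ile1.
have : 0 <= t ^+ (p - 2) by apply: exprn_ge0.
have : 0 <= t ^+ 2 by apply: sqr_ge0.
nra.
Qed.

(* Strict upper bound: test admissibility at t = 1 - s with s = exp(-2 p ln 2),
   where the s ln s term of Irate_le_near1 beats the loss 1 - (1-s)^p <= p s. *)
Lemma beta_star_lt_ln2 p : (0 < p)%N -> @beta_star R p < ln 2.
Proof.
move=> p0; set m := beta_star p; set L := ln (2 : R); set P := (p%:R : R).
have P1 : 1 <= P by rewrite /P ler1n.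
have L0 : 2^-1 <= L by apply: ln2_ge_half.
pose s := expR (- (2 * P * L)).
have s0 : 0 < s by apply: expR_gt0.
have s1 : s < 1 by rewrite /s expR_lt1; nra.
have lns : ln s = - (2 * P * L) by rewrite /s expRK.
have adm := beta_star_admissible _ p0 (1 - s) ltac:(apply/andP; split; lra).
have near1 := @Irate_le_near1 R s ltac:(by rewrite s0 s1).
have bern : 1 - P * s <= (1 - s) ^+ p by have := @bernoulli_ineq R p (- s); rewrite mulrN; apply; lra.
rewrite ltNge; apply/negP => hm.
have : L * (1 - P * s) <= m * (1 - s) ^+ p.
  apply: (@le_trans _ _ (L * (1 - s) ^+ p)); first by apply: ler_wpM2l; lra.
  by apply: ler_wpM2r => //; apply: exprn_ge0; lra.
rewrite lns -/L -/m in near1 adm; nra.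
Qed.

Lemma beta_star_two : @beta_star R 2 = 1 / 2.
Proof.
rewrite div1r; apply: le_anti; rewrite beta_star_ge_half // andbT.
set m := beta_star 2; rewrite leNgt; apply/negP => hm.
pose t := (2 * m - 1) / (2 * (2 * m + 1)).
have t0 : 0 < t by rewrite divr_gt0 //; lra.
have tt : t * (2 * (2 * m + 1)) = 2 * m - 1 by rewrite /t divfK //; lra.
have t1 : t < 1 by nra.
have adm := @beta_star_admissible 2 isT t ltac:(rewrite ltW // ltW //).
have near0 := @Irate_le_near0 R t ltac:(by rewrite ltW // t1).
have t2 : 0 < t ^+ 2 by apply: exprn_gt0.
have : 2 * (1 - t) * m * t ^+ 2 <= (1 + t) * t ^+ 2.
  have : 2 * (1 - t) * (m * t ^+ 2) <= 2 * (1 - t) * Irate t.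
    by apply: ler_wpM2l => //; lra.
  lra.
rewrite ler_pM2r //; nra.
Qed.

(* Part (2): beta*(p) + e^2/2 with e = (ln 2 - beta*(p))/4 is admissible
   for p+1, since t^(p+1) <= (1 - e^2) t^p away from 1. *)
Lemma beta_star_lt_succ p : (2 <= p)%N -> @beta_star R p < beta_star p.+1.
Proof.
move=> p2; have p0 : (0 < p)%N by apply: leq_trans p2.
have := beta_star_lt_ln2 _ p0; have := beta_star_ge_half _ p2; have := @ln2_le1 R.
set m := beta_star p => l1 mh ml.
pose e := (ln 2 - m) / 4.
have ln2E : ln 2 = m + 4 * e by rewrite /e; lra.
have e0 : 0 < e by rewrite /e; lra.
have e2 : e ^+ 2 <= e by rewrite expr2 /e; nra.
clearbody e; have e2_gt0 : 0 < e ^+ 2 by apply: exprn_gt0.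
apply: (@lt_le_trans _ _ (m + e ^+ 2 / 2)); first lra.
apply: beta_star_ge => //; first lra.
apply: (@admissible_off_near1 _ _ e); first (apply/andP; split; lra); first lra.
move=> t /andP[t0 t1].
apply: le_trans (beta_star_admissible _ p0 t _); last by rewrite t0; lra.
rewrite [t ^+ p.+1]exprS mulrA -/m; apply: ler_wpM2r; first exact: exprn_ge0.
have : (m + e ^+ 2 / 2) * t <= (m + e ^+ 2 / 2) * (1 - e ^+ 2).
  by apply: ler_wpM2l; lra.
nra.
Qed.

(* Quantitative lower bound behind part (1): ln 2 - 2e <= beta*(p) once
   (p - 2) e^2 >= 1, since then t^(p-2) <= 1/2 on [0, 1 - e^2). *)
Lemma beta_star_ge_ln2_sub e p : 0 < e <= 4^-1 -> (2 <= p)%N ->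
  1 <= (p - 2)%:R * e ^+ 2 -> ln 2 - 2 * e <= @beta_star R p.
Proof.
move=> /andP[e0 e1] p2 hN; have p0 : (0 < p)%N by apply: leq_trans p2.
have l2 := @ln2_le1 R; have l2' := @ln2_ge_half R.
have e2 : e ^+ 2 <= e by rewrite expr2; nra.
apply: beta_star_ge => //; first lra.
apply: (@admissible_off_near1 _ _ e); first (apply/andP; split; lra); first lra.
move=> t /andP[t0 ht]; have t1 : t <= 1 by have := sqr_ge0 e; lra.
apply: le_trans (@Irate_ge_sqr R t ltac:(by rewrite t0 t1)).
rewrite -(subnKC p2) exprD; set n := (p - 2)%N in hN *.
have decay := @expr1B_decay R n (e ^+ 2) ltac:(rewrite sqr_ge0 /=; lra).
have tn : t ^+ n <= (1 - e ^+ 2) ^+ n by apply: lerXn2r; rewrite ?nnegrE; lra.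
have : 0 <= (1 - e ^+ 2) ^+ n by apply: exprn_ge0; lra.
have tn_half : t ^+ n <= 2^-1 by nra.
have t2n : 0 <= t ^+ 2 * t ^+ n by rewrite mulr_ge0 ?sqr_ge0 ?exprn_ge0.
have : t ^+ 2 * t ^+ n <= t ^+ 2 * 2^-1 by apply: ler_wpM2l; rewrite ?sqr_ge0.
have : (ln 2 - 2 * e) * (t ^+ 2 * t ^+ n) <= t ^+ 2 * t ^+ n.
  by rewrite -[leRHS]mul1r; apply: ler_wpM2r => //; lra.
lra.
Qed.

End CurieWeissThreshold.

Theorem mainTheorem20 (R : realType) :
  ((fun p : nat => @beta_star R p) @ \oo --> ln (2 : R)) /\
  (forall p : nat, (2 <= p)%N -> @beta_star R p < @beta_star R p.+1) /\
  @beta_star R 2 = 1 / 2.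
Proof.
split; last by split; [exact: beta_star_lt_succ | exact: beta_star_two].
apply/cvgrPdist_le => eps eps0.
pose e : R := Num.min (eps / 2) 4^-1.
have he : 0 < e <= 4^-1 by rewrite lt_min ge_min lexx orbT andbT; apply/andP; split; lra.
have e_eps : e <= eps / 2 by rewrite ge_min lexx.
have e2 : 0 < e ^+ 2 by apply: exprn_gt0; case/andP: he.
exists (Num.truncn ((e ^+ 2)^-1)).+3 => // p /= hp.
have p2 : (2 <= p)%N by apply: leq_trans hp.
have hN : 1 <= (p - 2)%:R * e ^+ 2.
  rewrite -ler_pdivrMr // div1r; apply: ltW; apply: lt_le_trans (truncnS_gt _) _.
  by rewrite ler_nat leq_subRL.
have lower := @beta_star_ge_ln2_sub R e p he p2 hN.
have upper := @beta_star_lt_ln2 R p (ltnW p2).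
by rewrite ger0_norm; lra.
Qed.
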